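(* Consider any instance of the budgeted matching-market pricing problem (defined in the context) in which every buyer $i$ satisfies $b_i\ge v_i$, and run Algorithm 1 (described in the context). If buyer $i$ obtains her bundle $X_i$ at price per item $\bar p_i$, then every item that the algorithm assigns (to any buyer) at a price $p'<\bar p_i$ is not in $S_i$.
   Context: Instance: a finite set $I$ of $n$ buyers and a finite set $J$ of $m$ distinct items. Each buyer $i$ has a preference set $S_i\subseteq J$, a value $v_i>0$ for each item of $S_i$ (value $0$ for items outside $S_i$), and a budget $b_i\ge 0$. An outcome $\langle\mathbf{X},\mathbf{p}\rangle$ consists of pairwise disjoint bundles $X_i\subseteq J$ and payments $p_i\ge 0$. Algorithm 1 (ascending price auction). Throughout, $b_i$ denotes buyer $i$'s remaining budget (initially her budget, decreased by each payment), $J$ denotes the set of currently unsold items, and $\epsilon>0$ is an arbitrarily small price increment. For a price $p>0$, the demand of buyer $i$ is $D_i(p)=\min\{\lfloor b_i/p\rfloor,|S_i|\}$ if $p\le v_i$ and $D_i(p)=0$ if $p>v_i$. Let $A^p=\{i: v_i>p, D_i(p)>0\}$, $Q^p=\{i: v_i=p, D_i(p)>0\}$, $I^p=A^p\cup Q^p$. $G^p$ is the bipartite graph on $I^p\cup J$ with an edge $(i,j)$ iff $j\in S_i$, and $\bar G^p$ is its subgraph on $A^p\cup J$. A $B$-matching of $G^p$ (or $\bar G^p$) is a set of its edges in which every buyer $i$ lies in at most $D_i(p)$ edges and every item in at most one edge; $\mathcal{M}(G^p)$ denotes a maximum one. Given a $B$-matching $\mathcal{M}$, an augmenting path from buyer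 $i$ to item $j$ is a sequence $i=y_1,z_1,y_2,z_2,\dots,y_h,z_h=j$ of buyers $y_k$ and items $z_k$ with $z_k\in S_{y_k}$, $(y_k,z_k)\notin\mathcal{M}$ for all $k$, and $(z_k,y_{k+1})\in\mathcal{M}$ for $k<h$. ''Giving item $j$ to buyer $i$ at price $q$'' means: remove $j$ from $J$, add $j$ to $X_i$, increase $p_i$ by $q$ and decrease $b_i$ by $q$. Start with $p=0$, $X_i=\emptyset$, $p_i=0$. While a maximum $B$-matching of $G^p$ is nonempty: increase $p$ until $|\mathcal{M}(G^p)|>|\mathcal{M}(G^{p+\epsilon})|$ (a critical price). If $|\mathcal{M}(G^p)|>|\mathcal{M}(\bar G^p)|$, run Procedure I: let $J_Q=\bigcup_{i\in Q^p}S_i$; compute a maximum $B$-matching $\mathcal{M}$ of $\bar G^p$ that matches the minimum number of items of $J_Q$; let $\bar J$ be the items of $J$ unmatched in $\mathcal{M}$ and $N(\bar J)$ the buyers having an augmenting path w.r.t. $\mathcal{M}$ to some item of $\bar J$; give each item $j$ with $(i,j)\in\mathcal{M}$, $i\in N(\bar J)$, to $i$ at price $p$; and assign the items of $\bar J$ to buyers in $Q^p$ (respecting supply and budget constraints), each at price $p$. Otherwise run Procedure II: compute a maximum $B$-matching $\mathcal{M}$ of $G^{p+\epsilon}$; let $\bar J$ be the items unmatched in it and $N(\bar J)$ the buyers having an augmenting path to an item of $\bar J$; give each item $j$ with $(i,j)\in\mathcal{M}$, $i\in N(\bar J)$, to $i$ at price $p+\epsilon$; remove $\bar J$ from $J$;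 and remove all items no longer demanded by any buyer. *)

(* Formalization of Algorithm 1 (ascending price auction)
   for the budgeted matching-market pricing problem, as a relational
   (nondeterministic) transition system. *)
From mathcomp Require Import all_boot all_order all_algebra.
Set Implicit Arguments. Unset Strict Implicit. Unset Printing Implicit Defensive.
Import Order.TTheory GRing.Theory Num.Theory.
Local Open Scope ring_scope.

(* A state of the algorithm:
   - rem  : the set J of currently unsold (and not removed) items;
   - sold : for each item, None if not (yet) given to anybody, or
            Some (i, q) if it was given to buyer i at price q;
   - pr   : the current value of the price variable p. *)
Record state (R : realFieldType) (I J : finType) := St {
  rem : {set J};
  sold : J -> option (I * R);
  pr : R }.

Section Auction.

Definition init (R : realFieldType) (I J : finType) : state R I J :=
  @St R I J setT (fun _ => None) 0.

Definition paid (R : realFieldType) (I J : finType) (st : state R I J) (i : I) : R :=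
  \sum_(j : J) match sold st j with
               | Some (i', q) => if i' == i then q else 0
               | None => 0 end.

Definition bud (R : realFieldType) (I J : finType) (b : I -> R)
  (st : state R I J) (i : I) : R := b i - paid st i.

(* demand D_i(q) = min (floor (b_i / q), |S_i|) if q <= v_i, 0 otherwise;
   floor (b_i/q) is written as the largest k with k * q <= b_i. *)
Definition dem (R : realFieldType) (I J : finType) (S : I -> {set J})
  (v b : I -> R) (st : state R I J) (q : R) (i : I) : nat :=
  if q <= v i then \max_(k < #|S i|.+1 | (k : nat)%:R * q <= bud b st i) (k : nat)
  else 0%N.

Definition Aset (R : realFieldType) (I J : finType) (S : I -> {set J})
  (v b : I -> R) (st : state R I J) (q : R) : {set I} :=
  [set i | (q < v i) && (0 < dem S v b st q i)%N].
Definition Qset (R : realFieldType) (I J : finType) (S : I -> {set J})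
  (v b : I -> R) (st : state R I J) (q : R) : {set I} :=
  [set i | (v i == q) && (0 < dem S v b st q i)%N].
Definition Iset (R : realFieldType) (I J : finType) (S : I -> {set J})
  (v b : I -> R) (st : state R I J) (q : R) : {set I} :=
  Aset S v b st q :|: Qset S v b st q.

(* M is a B-matching of the bipartite graph on buyers Bs and items Js
   (edge (i,j) iff j \in S i), buyer i having capacity d i. *)
Definition bmatch (I J : finType) (S : I -> {set J}) (Bs : {set I}) (Js : {set J})
  (d : I -> nat) (M : {set I * J}) : bool :=
  [&& [forall x in M, [&& x.1 \in Bs, x.2 \in Js & x.2 \in S x.1]],
      [forall i, #|[set x in M | x.1 == i]| <= d i]%N &
      [forall j, #|[set x in M | x.2 == j]| <= 1]%N].

Definition maxbm (I J : finType) (S : I -> {set J}) (Bs : {set I}) (Js : {set J})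
  (d : I -> nat) (M : {set I * J}) : Prop :=
  bmatch S Bs Js d M /\ forall M', bmatch S Bs Js d M' -> (#|M'| <= #|M|)%N.

Definition msize (I J : finType) (S : I -> {set J}) (Bs : {set I}) (Js : {set J})
  (d : I -> nat) : nat :=
  \max_(M : {set I * J} | bmatch S Bs Js d M) #|M|.

Definition fG (R : realFieldType) (I J : finType) (S : I -> {set J})
  (v b : I -> R) (st : state R I J) (q : R) : nat :=
  msize S (Iset S v b st q) (rem st) (dem S v b st q).
Definition fGbar (R : realFieldType) (I J : finType) (S : I -> {set J})
  (v b : I -> R) (st : state R I J) (q : R) : nat :=
  msize S (Aset S v b st q) (rem st) (dem S v b st q).

Definition matched (I J : finType) (M : {set I * J}) : {set J} :=
  [set x.2 | x in M].

(* augmenting path from buyer i to item j w.r.t. M in the graph on Bs, Js: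
   the sequence of pairs (y_1,z_1) :: ... :: (y_h,z_h) *)
Definition augpath (I J : finType) (S : I -> {set J}) (Bs : {set I}) (Js : {set J})
  (M : {set I * J}) (i : I) (j : J) : Prop :=
  exists (x : I * J) (s : seq (I * J)),
    [/\ x.1 = i, (last x s).2 = j,
        all (fun y : I * J => [&& y.1 \in Bs, y.2 \in Js, y.2 \in S y.1 & y \notin M])
            (x :: s)
      & path (fun y y' : I * J => (y'.1, y.2) \in M) x s].

Definition crit (R : realFieldType) (I J : finType) (S : I -> {set J})
  (v b : I -> R) (st : state R I J) (p : R) : Prop :=
  [/\ pr st <= p,
      forall q, pr st <= q <= p -> fG S v b st q = fG S v b st (pr st)
    & forall q, p < q -> (fG S v b st q < fG S v b st p)%N].

Definition procI (R : realFieldType) (I J : finType) (S : I -> {set J})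
  (v b : I -> R) (st : state R I J) (p : R) (st' : state R I J) : Prop :=
  let A := Aset S v b st p in
  let Q := Qset S v b st p in
  let d := dem S v b st p in
  let JQ := \bigcup_(i in Q) S i in
  (fGbar S v b st p < fG S v b st p)%N /\
  exists (M MQ : {set I * J}),
    let Jbar := rem st :\: matched M in
    let N := fun i : I => exists2 j0, j0 \in Jbar & augpath S A (rem st) M i j0 in
    [/\ maxbm S A (rem st) d M,
        (forall M', maxbm S A (rem st) d M' ->
           (#|matched M :&: JQ| <= #|matched M' :&: JQ|)%N),
        maxbm S Q Jbar d MQ,
        [/\ forall i j, (i, j) \in M -> N i -> sold st' j = Some (i, p),
            forall i j, (i, j) \in MQ -> sold st' j = Some (i, p)
          & forall j, (forall i, (i, j) \in M -> ~ N i) ->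
                      (forall i, (i, j) \notin MQ) -> sold st' j = sold st j]
      & rem st' = [set j in rem st | sold st' j == None] /\ pr st' = p].

Definition procII (R : realFieldType) (I J : finType) (S : I -> {set J})
  (v b : I -> R) (e : R) (st : state R I J) (p : R) (st' : state R I J) : Prop :=
  let Ie := Iset S v b st (p + e) in
  let d := dem S v b st (p + e) in
  ~~ (fGbar S v b st p < fG S v b st p)%N /\
  exists M : {set I * J},
    let Jbar := rem st :\: matched M in
    let N := fun i : I => exists2 j0, j0 \in Jbar & augpath S Ie (rem st) M i j0 in
    [/\ maxbm S Ie (rem st) d M,
        forall i j, (i, j) \in M -> N i -> sold st' j = Some (i, p + e),
        forall j, (forall i, (i, j) \in M -> ~ N i) -> sold st' j = sold st j,
        rem st' = [set j in rem st | [&& sold st' j == None, j \notin Jbar &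
                     [exists i, (j \in S i) && (0 < dem S v b st' (p + e) i)%N]]]
      & pr st' = p].

Definition step (R : realFieldType) (I J : finType) (S : I -> {set J})
  (v b : I -> R) (e : R) (st st' : state R I J) : Prop :=
  (0 < fG S v b st (pr st))%N /\
  exists p, crit S v b st p /\ (procI S v b st p st' \/ procII S v b e st p st').

Definition final (R : realFieldType) (I J : finType) (S : I -> {set J})
  (v b : I -> R) (st : state R I J) : Prop :=
  fG S v b st (pr st) = 0%N.

Inductive run (R : realFieldType) (I J : finType) (S : I -> {set J})
  (v b : I -> R) (e : R) : state R I J -> state R I J -> Prop :=
| run0 st : run S v b e st st
| runS st1 st2 st3 : step S v b e st1 st2 -> run S v b e st2 st3 -> run S v b e st1 st3.

End Auction.

(* Two invariants of the run give the result: every sale is at a price at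
   most the buyer's value, and whenever an item of S_i is sold at a price
   p' < v_i, buyer i has already bought some item at a price at most p'.
   For the second, consider the step selling such an item j at price P.  If i
   bought before, she paid at most P, since sale prices never decrease
   (Procedure II sells at p + e, but cannot be followed by a Procedure I below
   p + e).  Otherwise she still has her whole budget b_i >= v_i > P, hence
   positive demand at P; as j is either unmatched or matched to a buyer with
   an augmenting path to an unmatched item, i has such a path as well, and
   maximality of the matching forces i to be matched, i.e. served at P in
   that very step.  So if i pays pbar per item and some j' in S_i were sold
   at p' < pbar <= v_i, she would have bought an item at a price at most
   p' < pbar. *)

From Pilot Require Import Defs.
From mathcomp Require Import all_boot all_order all_algebra.
From mathcomp Require Import zify.
From Stdlib Require Import Classical.
Import Order.TTheory GRing.Theory Num.Theory.
Set Implicit Arguments. Unset Strict Implicit. Unset Printing Implicit Defensive.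
Local Open Scope ring_scope.

(* [seq.rem] would otherwise shadow the field [rem] of [state]. *)
Local Notation rem := Defs.rem.

Lemma card_setU1_filter (T : finType) (A : {set T}) (P : pred T) b :
  b \notin A -> #|[set z in b |: A | P z]| = (P b + #|[set z in A | P z]|)%N.
Proof.
move=> bA; case Pb: (P b).
  have -> : [set z in b |: A | P z] = b |: [set z in A | P z].
    by apply/setP=> z; rewrite !inE; case: (z =P b) => [->|].
  by rewrite cardsU1 inE (negbTE bA).
apply: eq_card => z; rewrite !inE.
by case: (z =P b) => [->|]; rewrite ?Pb ?andbF.
Qed.

Lemma card_swap_filter (T : finType) (A : {set T}) (P : pred T) a b :
  a \in A -> b \notin A ->
  (#|[set z in b |: (A :\ a) | P z]| + P a = #|[set z in A | P z]| + P b)%N.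
Proof.
move=> aA bA; have bAa : b \notin A :\ a by rewrite inE (negbTE bA) andbF.
rewrite card_setU1_filter // -[in RHS](setD1K aA) card_setU1_filter ?setD11 //.
lia.
Qed.

Section BMatching.

Variables (I J : finType) (S : I -> {set J}) (Bs : {set I}) (Js : {set J}) (d : I -> nat).
Implicit Types (M : {set I * J}) (x : I * J).

Local Notation bmatch := (bmatch S Bs Js d).
Local Notation maxbm := (maxbm S Bs Js d).
Local Notation augpath := (augpath S Bs Js).
Local Notation deg M i := #|[set y in M | y.1 == i]|.

Definition edge x := [&& x.1 \in Bs, x.2 \in Js & x.2 \in S x.1].

Definition reaches_free M i := exists2 j0, j0 \in Js :\: matched M & augpath M i j0.

Lemma bmatchP M :
  bmatch M <->
  [/\ forall x, x \in M -> edge x,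
      forall i, (deg M i <= d i)%N &
      forall j, (#|[set x in M | x.2 == j]| <= 1)%N].
Proof.
rewrite /bmatch; split.
  by case/and3P=> /forall_inP edgeM /forallP degM /forallP itemM.
by case=> edgeM degM itemM; apply/and3P; split; apply/forallP=> // x; apply/implyP=> /edgeM.
Qed.

Lemma bmatch_edge M x : bmatch M -> x \in M -> edge x.
Proof. by case/bmatchP=> edgeM _ _; apply: edgeM. Qed.

Lemma bmatch_inj M : bmatch M -> {in M &, injective snd}.
Proof.
case/bmatchP=> _ _ itemM x y xM yM exy.
by apply: (card_le1_eqP (itemM x.2)); rewrite !inE ?xM ?yM ?exy eqxx.
Qed.

Lemma card_matched M : bmatch M -> #|matched M| = #|M|.
Proof. by move=> bmM; rewrite card_in_imset //; apply: bmatch_inj bmM. Qed.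

Lemma bmatch_card_le M : bmatch M -> (#|M| <= #|Js|)%N.
Proof.
move=> bmM; rewrite -card_matched //; apply/subset_leq_card/subsetP=> _ /imsetP[x xM ->].
by case/and3P: (bmatch_edge bmM xM).
Qed.

Lemma matched_notin M x : x.2 \notin matched M -> x \notin M.
Proof. by apply: contra => xM; apply/imsetP; exists x. Qed.

Lemma bmatch_setU1 M x :
  bmatch M -> edge x -> x.2 \notin matched M -> (deg M x.1 < d x.1)%N ->
  bmatch (x |: M).
Proof.
move=> /bmatchP[edgeM degM itemM] ex xm xd; have xM := matched_notin xm.
apply/bmatchP; split.
- by move=> y; rewrite !inE => /orP[/eqP ->|/edgeM].
- move=> i; rewrite (card_setU1_filter (fun y : I * J => y.1 == i) xM) /=.
  by case: (x.1 =P i) => [<-|_]; [rewrite add1n | apply: degM].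
- move=> j; rewrite (card_setU1_filter (fun y : I * J => y.2 == j) xM) /=.
  case: (x.2 =P j) => [<-|_]; last exact: itemM.
  suff -> : [set y in M | y.2 == x.2] = set0 by rewrite cards0.
  apply/setP=> y; rewrite !inE; apply/andP=> -[yM /eqP yx].
  by move/negP: xm; apply; apply/imsetP; exists y.
Qed.

(* [a.1] loses an edge, which leaves room for the next edge of the
   augmenting path. *)
Lemma bmatch_swap M x a :
  bmatch M -> edge x -> x \notin M -> a \in M -> a.2 = x.2 -> a.1 != x.1 ->
  (deg M x.1 < d x.1)%N ->
  [/\ bmatch (x |: (M :\ a)), #|x |: (M :\ a)| = #|M| & (deg (x |: (M :\ a)) a.1 < d a.1)%N].
Proof.
move=> bmM ex xM aM ax ay xd; case/bmatchP: (bmM) => edgeM degM itemM.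
have swap P := card_swap_filter P aM xM.
split.
- apply/bmatchP; split.
  + by move=> z; rewrite !inE => /orP[/eqP ->|/andP[_ /edgeM]].
  + move=> k; have := swap (fun z : I * J => z.1 == k) => /=.
    case: (x.1 =P k) => [<-|_]; rewrite ?(negbTE ay) /= => E.
      by rewrite addn0 addn1 in E; rewrite E.
    by rewrite addn0 in E; apply: leq_trans (degM k); rewrite -E leq_addr.
  + by move=> j; have /= := swap (fun z : I * J => z.2 == j); rewrite ax => /addIn ->.
- by rewrite cardsU1 inE negb_and xM orbT [in RHS](cardsD1 a) aM.
- have /= := swap (fun z : I * J => z.1 == a.1).
  rewrite eqxx eq_sym (negbTE ay) addn0 addn1 => E.
  by rewrite E; apply: degM.
Qed.

Definition free_edge M y := [&& y.1 \in Bs, y.2 \in Js, y.2 \in S y.1 & y \notin M].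
Definition alternates M (y y' : I * J) := (y'.1, y.2) \in M.

Lemma alt_path_shortcut M x s z :
  all (free_edge M) (x :: s) -> path (alternates M) x s -> z \in s -> z.2 = x.2 ->
  exists s2, [/\ (size s2 < size s)%N, all (free_edge M) (x :: s2),
                 path (alternates M) x s2 & (last x s2).2 = (last x s).2].
Proof.
move=> + + zin; case/splitPr: zin => s1 s2 hall hpath zx; exists s2; split.
- by rewrite size_cat /= addnS ltnS leq_addl.
- by move: hall; rewrite /= all_cat /= => /and3P[-> _ /andP[_ ->]].
- move: hpath; rewrite cat_path /= => /and3P[_ _].
  by case: s2 {hall} => //= w t; rewrite /alternates zx.
- by rewrite last_cat /=; case: s2 {hall hpath}.
Qed.

Lemma alt_path_swap M x y s :
  all (free_edge M) (x :: y :: s) -> path (alternates M) x (y :: s) ->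
  (forall z, z \in y :: s -> z.2 != x.2) ->
  let M1 := x |: (M :\ (y.1, x.2)) in
  [/\ all (free_edge M1) (y :: s), path (alternates M1) y s &
      (last y s).2 \notin matched M -> (last y s).2 \notin matched M1].
Proof.
move=> hall /andP[_ hpath] nx M1; split.
- apply/allP=> z zin; rewrite /free_edge.
  have /(allP hall)/and4P[-> -> -> zM] : z \in x :: y :: s by rewrite inE zin orbT.
  rewrite /= !inE negb_or negb_and zM orbT andbT.
  by apply: contra (nx z zin) => /eqP ->.
- apply: (sub_in_path (P := fun z : I * J => z.2 != x.2)) hpath; last exact/allP.
  move=> u w ux _; have {}ux : u.2 != x.2 := ux.
  rewrite /alternates !inE => ->; rewrite andbT; apply/orP; right.
  by apply: contraNneq ux => -[_ ->].
- have lx := nx _ (mem_last y s).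
  apply: contra => /imsetP[z]; rewrite !inE => /orP[/eqP ->|/andP[_ zM]] lz.
    by rewrite lz eqxx in lx.
  by apply/imsetP; exists z.
Qed.

Lemma bmatch_augment M x s :
  bmatch M -> all (free_edge M) (x :: s) -> path (alternates M) x s ->
  (last x s).2 \notin matched M -> (deg M x.1 < d x.1)%N ->
  exists2 M', bmatch M' & #|M'| = #|M|.+1.
Proof.
have [n] := ubnP (size s); elim: n s M x => // n IH [|y s] M x /ltnSE sn bmM hall hpath hl hd;
  have /andP[/and4P[x1 x2 x3 xM] _] := hall; have ex : edge x by apply/and3P.
  exists (x |: M); first exact: bmatch_setU1.
  by rewrite cardsU1 matched_notin.
have [/hasP[z zin /eqP zx]|nx] := boolP (has (fun z : I * J => z.2 == x.2) (y :: s)).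
  have [s2 [s2n hall2 hpath2 hl2]] := alt_path_shortcut hall hpath zin zx.
  by apply: (IH s2 M x (leq_trans s2n sn) bmM hall2 hpath2); rewrite ?hl2.
have nx' z : z \in y :: s -> z.2 != x.2.
  by move=> zin; apply: contraNneq nx => zx; apply/hasP; exists z; rewrite ?zx.
have aM : (y.1, x.2) \in M by case/andP: hpath.
have yx : y.1 != x.1.
  by apply: contraNneq xM => e; move: aM; rewrite e -surjective_pairing.
have [bm1 card1 deg1] := bmatch_swap bmM ex xM aM erefl yx hd.
have [hall1 hpath1 hl1] := alt_path_swap hall hpath nx'.
have [M' bm' cM'] := IH s (x |: (M :\ (y.1, x.2))) y sn bm1 hall1 hpath1 (hl1 hl) deg1.
by exists M'; rewrite // cM' card1.
Qed.

Lemma augpath_free M i j : edge (i, j) -> j \notin matched M -> augpath M i j.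
Proof.
move=> /and3P[iB jJ jS] jm; exists (i, j), [::]; split=> //=.
by rewrite iB jJ jS (@matched_notin M (i, j) jm).
Qed.

Lemma augpath_cons M i i' j j0 :
  edge (i, j) -> (i, j) \notin M -> (i', j) \in M -> augpath M i' j0 -> augpath M i j0.
Proof.
move=> /and3P[iB jJ jS] ijM i'jM [x [s [x1 xl xall xpath]]].
exists (i, j), (x :: s); split=> //=; first by rewrite iB jJ jS ijM.
by rewrite x1 i'jM xpath.
Qed.

(* Otherwise the augmenting path from the unmatched buyer [i] would
   enlarge the maximum matching [M]. *)
Lemma maxbm_reaches_free_matched M i :
  maxbm M -> reaches_free M i -> (0 < d i)%N -> exists j, (i, j) \in M.
Proof.
move=> [bmM maxM] [j0 /setDP[_ j0m] [x [s [x1 xl xall xpath]]]] di.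
apply/existsP/contraT => unmatched.
have deg0 : deg M x.1 = 0%N.
  apply/eqP; rewrite cards_eq0; apply/eqP/setP=> y; rewrite !inE.
  apply/andP=> -[yM /eqP yx]; move/existsP: unmatched; apply; exists y.2.
  by rewrite -x1 -yx -surjective_pairing.
have hl : (last x s).2 \notin matched M by rewrite xl.
have hd : (deg M x.1 < d x.1)%N by rewrite deg0 x1.
have [M' /maxM le cM] := bmatch_augment bmM xall xpath hl hd.
by rewrite cM ltnn in le.
Qed.

Lemma maxbm_neighbour_reaches_free M i j :
  maxbm M -> edge (i, j) -> (0 < d i)%N ->
  j \notin matched M \/ (exists2 i', (i', j) \in M & reaches_free M i') ->
  exists2 j2, (i, j2) \in M & reaches_free M i.
Proof.
move=> maxM eij di hj.
have ri : reaches_free M i.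
  case: hj => [jm | [i' i'jM [j0 j0free pi']]].
    by exists j; [rewrite inE jm; case/and3P: eij | exact: augpath_free].
  have [ijM | ijM] := boolP ((i, j) \in M).
    by have [->] := bmatch_inj maxM.1 ijM i'jM erefl; exists j0.
  by exists j0; last exact: augpath_cons eij ijM i'jM pi'.
by have [j2 ij2M] := maxbm_reaches_free_matched maxM ri di; exists j2.
Qed.

Lemma bmatch_le_msize M : bmatch M -> (#|M| <= msize S Bs Js d)%N.
Proof. exact: leq_bigmax_cond. Qed.

Lemma msize_le_card : (msize S Bs Js d <= #|Js|)%N.
Proof. by apply/bigmax_leqP => M; apply: bmatch_card_le. Qed.

End BMatching.

Section Auction.

Variables (R : realFieldType) (I J : finType) (S : I -> {set J}) (v b : I -> R) (e : R).
Hypotheses (v_le_b : forall k, v k <= b k) (e_ge0 : 0 <= e).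
Implicit Types (st : state R I J) (M : {set I * J}).

Lemma dem_gt0 st q k j :
  j \in S k -> q <= v k -> q <= bud b st k -> (0 < dem S v b st q k)%N.
Proof.
move=> jS qv qb; rewrite /dem qv.
have k1 : (1 < #|S k|.+1)%N by rewrite ltnS; apply/card_gt0P; exists j.
by apply: leq_trans (leq_bigmax_cond (Ordinal k1) _) => //=; rewrite mul1r.
Qed.

Lemma dem_antimono st st' q q' k :
  bud b st' k = bud b st k -> q <= q' -> q' <= v k ->
  (dem S v b st q' k <= dem S v b st' q k)%N.
Proof.
move=> eb qq qv; rewrite /dem qv (le_trans qq qv).
apply/bigmax_leqP => m hm; apply: leq_bigmax_cond.
by rewrite eb; apply: le_trans hm; apply: ler_wpM2l.
Qed.

Lemma Aset_lt_value st q i : i \in Aset S v b st q -> q < v i.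
Proof. by rewrite inE => /andP[]. Qed.

Lemma Qset_value st q i : i \in Qset S v b st q -> v i = q.
Proof. by rewrite inE => /andP[/eqP]. Qed.

Lemma Iset_le_value st q i : i \in Iset S v b st q -> q <= v i.
Proof. by case/setUP=> [/Aset_lt_value/ltW | /Qset_value ->]. Qed.

Lemma paid_eq0 st k : (forall j q, sold st j <> Some (k, q)) -> paid st k = 0.
Proof.
move=> unserved; rewrite /paid big1 // => j _.
case E: (sold st j) => [[i q]|] //; case: (i =P k) => // ik.
by case: (unserved j q); rewrite E ik.
Qed.

Lemma paid_eq st st' k :
  (forall j, sold st' j = sold st j \/
     (sold st j = None /\ exists i q, sold st' j = Some (i, q) /\ i != k)) ->
  paid st' k = paid st k.
Proof.
move=> same; rewrite /paid; apply: eq_bigr => j _.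
by case: (same j) => [-> | [-> [i [q [-> /negbTE ->]]]]].
Qed.

Definition rem_unsold st := forall j, j \in rem st -> sold st j = None.

Definition procI_excluded st :=
  forall q, pr st <= q -> q < pr st + e -> ~~ (fGbar S v b st q < fG S v b st q)%N.

(* Procedure II sells at [p + e] but leaves the price variable at [p]; a
   Procedure I at a price in the window from [p] to [p + e] would undercut
   these sales, which is what [procI_excluded] rules out. *)
Definition sale_prices_bounded st := forall j i q, sold st j = Some (i, q) ->
  q <= pr st \/ (q <= pr st + e /\ procI_excluded st).

Definition sales_le_value st := forall j i q, sold st j = Some (i, q) -> q <= v i.

Definition liked_sales_served st := forall j' i' p' i,
  sold st j' = Some (i', p') -> j' \in S i -> p' < v i ->
  exists j q, sold st j = Some (i, q) /\ q <= p'.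

Record step_effect st st' (P : R) : Prop := StepEffect {
  sold_kept : forall j, sold st j != None -> sold st' j = sold st j;
  new_sale_price : forall j i q, sold st j = None -> sold st' j = Some (i, q) -> q = P;
  new_sale_le_value : forall j i q, sold st j = None -> sold st' j = Some (i, q) -> q <= v i;
  new_sale_serves : forall j i k, sold st j = None -> sold st' j = Some (i, P) ->
    j \in S k -> P < v k -> paid st k = 0 -> exists j2, sold st' j2 = Some (k, P);
  old_sale_le : forall j i q, sold st j = Some (i, q) -> q <= P;
  rem_unsold_next : rem_unsold st';
  bounded_next : sale_prices_bounded st' }.

Definition auction_inv st :=
  [/\ rem_unsold st, sale_prices_bounded st, sales_le_value st & liked_sales_served st].

Lemma step_effect_inv st st' P : step_effect st st' P -> auction_inv st -> auction_inv st'.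
Proof.
move=> [kept newP newv serves oldle unsold' bounded'] [_ _ lev served].
split=> //.
- move=> j i q h; case E: (sold st j) => [[i0 q0]|]; last exact: newv E h.
  by apply: (lev j); rewrite -h kept ?E.
- move=> j' i' p' i h jS pv; case E: (sold st j') => [[i0 q0]|].
    have h0 : sold st j' = Some (i', p') by rewrite -h kept ?E.
    have [j [q [hj hq]]] := served _ _ _ _ h0 jS pv.
    by exists j, q; rewrite kept ?hj.
  have p'P := newP _ _ _ E h; subst p'.
  have [[j0 [q0 hj0]]|none] := classic (exists j0 q0, sold st j0 = Some (i, q0)).
    by exists j0, q0; rewrite kept ?hj0 //; split=> //; apply: oldle hj0.
  have unpaid : paid st i = 0 by apply: paid_eq0 => j q hj; apply: none; exists j, q.
  have [j2 h2] := serves _ _ _ E h jS pv unpaid.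
  by exists j2, P.
Qed.

Section ProcedureI.

Variables (st st' : state R I J) (p : R) (M MQ : {set I * J}).

Local Notation A := (Aset S v b st p).
Local Notation d := (dem S v b st p).
Local Notation N := (reaches_free S A (rem st) M).

Hypotheses (unsold : rem_unsold st) (maxM : maxbm S A (rem st) d M)
  (maxMQ : maxbm S (Qset S v b st p) (rem st :\: matched M) d MQ)
  (sold_M : forall i j, (i, j) \in M -> N i -> sold st' j = Some (i, p))
  (sold_MQ : forall i j, (i, j) \in MQ -> sold st' j = Some (i, p))
  (sold_same : forall j, (forall i, (i, j) \in M -> ~ N i) ->
                 (forall i, (i, j) \notin MQ) -> sold st' j = sold st j).

Lemma procI_sold_kept j : sold st j != None -> sold st' j = sold st j.
Proof.
move=> jsold; have jrem : j \notin rem st by apply: contra jsold => /unsold ->.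
apply: sold_same => i.
  by move=> ijM; case/and3P: (bmatch_edge maxM.1 ijM) => _ /= jr; rewrite jr in jrem.
apply: contra jrem => ijMQ.
by case/and3P: (bmatch_edge maxMQ.1 ijMQ) => _ /setDP[].
Qed.

Lemma procI_new_sale j i q : sold st j = None -> sold st' j = Some (i, q) ->
  q = p /\ ((i, j) \in M /\ N i \/ (i, j) \in MQ).
Proof.
move=> hj hj'.
have [[i0 [i0M Ni0]]|notM] := classic (exists i0, (i0, j) \in M /\ N i0).
  by move: (sold_M i0M Ni0); rewrite hj' => -[-> ->]; split; last left.
have [/existsP[i0 i0Q]|notQ] := boolP [exists i0, (i0, j) \in MQ].
  by move: (sold_MQ i0Q); rewrite hj' => -[-> ->]; split; last right.
suff : sold st' j = sold st j by rewrite hj hj'.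
apply: sold_same => i0 => [i0M Ni0|]; first by apply: notM; exists i0.
by apply: contra notQ => i0Q; apply/existsP; exists i0.
Qed.

Lemma procI_new_sale_le_value j i q :
  sold st j = None -> sold st' j = Some (i, q) -> q <= v i.
Proof.
move=> hj hj'; have [-> [[ijM _]|ijMQ]] := procI_new_sale hj hj'.
  by case/and3P: (bmatch_edge maxM.1 ijM) => /Aset_lt_value/ltW.
by case/and3P: (bmatch_edge maxMQ.1 ijMQ) => /Qset_value ->.
Qed.

Lemma procI_serves j i k :
  sold st j = None -> sold st' j = Some (i, p) -> j \in S k -> p < v k ->
  paid st k = 0 -> exists j2, sold st' j2 = Some (k, p).
Proof.
move=> hj hj' jS pk unpaid.
have dk : (0 < d k)%N.
  by apply: (dem_gt0 jS (ltW pk)); rewrite /bud unpaid subr0 (le_trans (ltW pk)).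
have kA : k \in A by rewrite inE pk dk.
have [jrem jfree] : j \in rem st /\
    (j \notin matched M \/ exists2 i', (i', j) \in M & N i').
  case: (procI_new_sale hj hj') => _ [[ijM Ni] | ijMQ].
    by case/and3P: (bmatch_edge maxM.1 ijM) => _ jr _; split; last by right; exists i.
  by case/and3P: (bmatch_edge maxMQ.1 ijMQ) => _ /setDP[jr jm] _; split; last left.
have ekj : edge S A (rem st) (k, j) by rewrite /edge kA jrem jS.
have [j2 kj2M Nk] := maxbm_neighbour_reaches_free maxM ekj dk jfree.
by exists j2; apply: sold_M.
Qed.

End ProcedureI.

Lemma procI_effect st st' p :
  rem_unsold st -> sale_prices_bounded st -> pr st <= p ->
  procI S v b st p st' -> step_effect st st' p.
Proof.
move=> unsold bounded prp.
case=> critI [M [MQ [maxM _ maxMQ [sold_M sold_MQ sold_same] [rem' pr']]]].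
have kept := procI_sold_kept unsold maxM maxMQ sold_same.
have new := procI_new_sale sold_M sold_MQ sold_same.
have oldle j i q : sold st j = Some (i, q) -> q <= p.
  case/bounded=> [qpr | [qpre excl]]; first exact: le_trans qpr prp.
  case: (leP (pr st + e) p) => [|ppre]; first exact: le_trans qpre.
  by move: (excl p prp ppre); rewrite critI.
split=> //.
- by move=> j i q hj hj'; case: (new _ _ _ hj hj').
- exact: procI_new_sale_le_value maxM maxMQ sold_M sold_MQ sold_same.
- exact: procI_serves maxM maxMQ sold_M sold_MQ sold_same.
- by move=> j; rewrite rem' inE => /andP[_ /eqP].
- move=> j i q h; left; rewrite pr'.
  case E: (sold st j) => [[i0 q0]|]; last by case: (new _ _ _ E h) => ->.
  by apply: (oldle j i); rewrite -h kept ?E.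
Qed.

Section ProcedureII.

Variables (st st' : state R I J) (p : R) (M : {set I * J}).

Local Notation Ie := (Iset S v b st (p + e)).
Local Notation d := (dem S v b st (p + e)).
Local Notation N := (reaches_free S Ie (rem st) M).
Local Notation M' := [set x in M | x.2 \in rem st'].

Hypotheses (unsold : rem_unsold st) (maxM : maxbm S Ie (rem st) d M)
  (sold_N : forall i j, (i, j) \in M -> N i -> sold st' j = Some (i, p + e))
  (sold_same : forall j, (forall i, (i, j) \in M -> ~ N i) -> sold st' j = sold st j)
  (rem' : rem st' = [set j in rem st | [&& sold st' j == None, j \notin rem st :\: matched M &
                     [exists i, (j \in S i) && (0 < dem S v b st' (p + e) i)%N]]])
  (pr' : pr st' = p).

Lemma procII_sold_cases j : sold st' j = sold st j \/
  (sold st j = None /\ exists i, [/\ (i, j) \in M, N i & sold st' j = Some (i, p + e)]).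
Proof.
have [[i [ijM Ni]]|notN] := classic (exists i, (i, j) \in M /\ N i).
  right; split; last by exists i; split=> //; apply: sold_N.
  by apply: unsold; case/and3P: (bmatch_edge maxM.1 ijM).
by left; apply: sold_same => i ijM Ni; apply: notN; exists i.
Qed.

Lemma procII_sold_kept j : sold st j != None -> sold st' j = sold st j.
Proof. by case: (procII_sold_cases j) => [|[->]]. Qed.

Lemma procII_new_sale j i q : sold st j = None -> sold st' j = Some (i, q) ->
  [/\ q = p + e, (i, j) \in M & N i].
Proof.
move=> hj hj'; case: (procII_sold_cases j) => [|[_ [i0 [i0M Ni0]]]]; first by rewrite hj hj'.
by rewrite hj' => -[-> ->].
Qed.

Lemma procII_new_sale_le_value j i q :
  sold st j = None -> sold st' j = Some (i, q) -> q <= v i.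
Proof.
move=> hj hj'; have [-> ijM _] := procII_new_sale hj hj'.
by case/and3P: (bmatch_edge maxM.1 ijM) => /Iset_le_value.
Qed.

Lemma procII_serves j i k :
  sold st j = None -> sold st' j = Some (i, p + e) -> j \in S k -> p + e < v k ->
  paid st k = 0 -> exists j2, sold st' j2 = Some (k, p + e).
Proof.
move=> hj hj' jS pk unpaid.
have dk : (0 < d k)%N.
  by apply: (dem_gt0 jS (ltW pk)); rewrite /bud unpaid subr0 (le_trans (ltW pk)).
have kIe : k \in Ie by rewrite !inE pk dk.
have [_ ijM Ni] := procII_new_sale hj hj'.
have ekj : edge S Ie (rem st) (k, j).
  by case/and3P: (bmatch_edge maxM.1 ijM) => _ jrem _; rewrite /edge kIe jrem jS.
have jfree : j \notin matched M \/ exists2 i', (i', j) \in M & N i' by right; exists i.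
have [j2 kj2M Nk] := maxbm_neighbour_reaches_free maxM ekj dk jfree.
by exists j2; apply: sold_N.
Qed.

Lemma procII_rem_unsold : rem_unsold st'.
Proof. by move=> j; rewrite rem' inE => /and4P[_ /eqP]. Qed.

Lemma procII_rem_buyer_unreached i j : (i, j) \in M -> j \in rem st' -> ~ N i.
Proof. by move=> ijM /procII_rem_unsold jfree /(sold_N ijM); rewrite jfree. Qed.

Lemma procII_rem_matched j : j \in rem st' -> exists2 i, (i, j) \in M & ~ N i.
Proof.
move=> jrem; have := jrem; rewrite rem' inE => /and4P[jrem0 _ jm _].
have /imsetP[[i j0] ijM /= jj0] : j \in matched M by move: jm; rewrite inE jrem0 andbT negbK.
by subst j0; exists i => //; apply: procII_rem_buyer_unreached jrem.
Qed.

Lemma procII_bud_kept k : ~ N k -> bud b st' k = bud b st k.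
Proof.
move=> nNk; congr (_ - _); apply: paid_eq => j.
case: (procII_sold_cases j) => [|[hj [i [_ Ni ->]]]]; first by left.
right; split=> //; exists i, (p + e); split=> //.
by apply/eqP => ik; apply: nNk; rewrite -ik.
Qed.

Lemma procII_restrict_deg q k : q <= p + e ->
  (#|[set y in M' | y.1 == k]| <= dem S v b st' q k)%N.
Proof.
move=> qpe; have [->|/card_gt0P[y]] := posnP #|[set y in M' | y.1 == k]|; first by [].
rewrite !inE => /andP[/andP[yM yrem] /eqP yk].
have ykM : (k, y.2) \in M by rewrite -yk -surjective_pairing.
have nNk := procII_rem_buyer_unreached ykM yrem.
have [kIe _ _] := and3P (bmatch_edge maxM.1 ykM).
apply: leq_trans (dem_antimono (procII_bud_kept nNk) qpe (Iset_le_value kIe)).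
case/bmatchP: maxM.1 => _ degM _; apply: leq_trans (degM k).
by apply/subset_leq_card/subsetP => x; rewrite !inE => /andP[/andP[-> _] ->].
Qed.

Lemma procII_restrict_bmatch q : q < p + e ->
  bmatch S (Aset S v b st' q) (rem st') (dem S v b st' q) M'.
Proof.
move=> qpe; case/bmatchP: maxM.1 => edgeM _ itemM.
apply/bmatchP; split; last 1 first.
- move=> j; apply: leq_trans (itemM j).
  by apply/subset_leq_card/subsetP => x; rewrite !inE => /andP[/andP[-> _] ->].
- move=> x; rewrite inE => /andP[xM xrem]; have /and3P[xIe _ xS] := edgeM x xM.
  rewrite /edge xrem xS inE (lt_le_trans qpe (Iset_le_value xIe)) /= andbT.
  apply: leq_trans (procII_restrict_deg x.1 (ltW qpe)).
  by apply/card_gt0P; exists x; rewrite !inE xM xrem eqxx.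
- by move=> k; apply: procII_restrict_deg (ltW qpe).
Qed.

(* Right after Procedure II every remaining item is still matched by [M], to
   a buyer whose budget has not changed, so below [p + e] the matching [M']
   saturates all remaining items inside the smaller graph [Gbar]. *)
Lemma procII_excludes_procI : procI_excluded st'.
Proof.
move=> q; rewrite pr' => _ qpe; rewrite -leqNgt.
have bmM' := procII_restrict_bmatch qpe.
have matchedM' : matched M' = rem st'.
  apply/setP => j; apply/imsetP/idP => [[x] | jrem]; first by rewrite inE => /andP[_ ?] ->.
  by have [i ijM _] := procII_rem_matched jrem; exists (i, j); rewrite // inE ijM.
apply: leq_trans (msize_le_card _ _ _ _) _.
by rewrite -matchedM' (card_matched bmM'); apply: bmatch_le_msize.
Qed.

End ProcedureII.

Lemma procII_effect st st' p :
  rem_unsold st -> sale_prices_bounded st -> pr st <= p ->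
  procII S v b e st p st' -> step_effect st st' (p + e).
Proof.
move=> unsold bounded prp [_ [M [maxM sold_N sold_same rem' pr']]].
have kept := procII_sold_kept unsold maxM sold_N sold_same.
have new := procII_new_sale unsold maxM sold_N sold_same.
have oldle j i q : sold st j = Some (i, q) -> q <= p + e.
  case/bounded=> [qpr | [qpre _]]; last by rewrite (le_trans qpre) ?lerD2r.
  by rewrite (le_trans qpr) // (le_trans prp) ?lerDl.
split=> //.
- by move=> j i q hj hj'; case: (new _ _ _ hj hj').
- exact: procII_new_sale_le_value unsold maxM sold_N sold_same.
- exact: procII_serves unsold maxM sold_N sold_same.
- exact: procII_rem_unsold rem'.
- move=> j i q h; right; rewrite pr'; split.
    case E: (sold st j) => [[i0 q0]|]; last by case: (new _ _ _ E h) => ->.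
    by apply: (oldle j i); rewrite -h kept ?E.
  exact: procII_excludes_procI unsold maxM sold_N sold_same rem' pr'.
Qed.

Lemma step_inv st st' : step S v b e st st' -> auction_inv st -> auction_inv st'.
Proof.
move=> [_ [p [[prp _ _] procs]]] inv; have [unsold bounded _ _] := inv.
case: procs => [hI | hII]; apply: step_effect_inv inv.
  exact: procI_effect unsold bounded prp hI.
exact: procII_effect unsold bounded prp hII.
Qed.

Lemma run_inv st st' : run S v b e st st' -> auction_inv st -> auction_inv st'.
Proof. by elim=> // st1 st2 st3 /step_inv hstep _ IH /hstep. Qed.

Lemma init_inv : auction_inv (init R I J).
Proof. by []. Qed.

End Auction.

Theorem lemma6 (R : realFieldType) (I J : finType) (S : I -> {set J}) (v b : I -> R) :
  (forall i, 0 < v i) -> (forall i, 0 <= b i) -> (forall i, v i <= b i) ->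
  exists2 e0 : R, 0 < e0 &
  forall e : R, 0 < e -> e < e0 ->
  forall fin : state R I J, run S v b e (init R I J) fin -> final S v b fin ->
  forall (i : I) (pbar : R),
    (exists j, sold fin j = Some (i, pbar)) ->
    (forall j q, sold fin j = Some (i, q) -> q = pbar) ->
    forall (j' : J) (i' : I) (p' : R), sold fin j' = Some (i', p') -> p' < pbar ->
      j' \notin S i.
Proof.
(* Any positive bound works: the invariants only need [0 <= e]. *)
move=> _ _ v_le_b; exists 1 => // e e_gt0 _ fin hrun _ i pbar [j hj] hprice j' i' p' hj' p'lt.
have [_ _ le_value served] := run_inv v_le_b (ltW e_gt0) hrun (init_inv S v b e).
apply/negP => j'S.
have [j2 [q [hj2 qle]]] := served _ _ _ _ hj' j'S (lt_le_trans p'lt (le_value _ _ _ hj)).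
by move: (le_lt_trans qle p'lt); rewrite (hprice _ _ hj2) ltxx.
Qed.
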